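(* Every nonempty sibling $\sigma_d$-invariant lamination $\mathcal L$ contains a chief, i.e. a sublamination which is a nonempty sibling $\sigma_d$-invariant lamination minimal by inclusion among such.
   Context: $\mathbb S$ is the unit circle, $\sigma_d(z)=z^d$, $d\ge2$. A chord $\overline{ab}$ joins $a,b\in\mathbb S$; distinct chords cross if they meet in the open unit disk; a chord is critical if $a\ne b$ and $\sigma_d(a)=\sigma_d(b)$. A lamination is a family of pairwise non-crossing chords (leaves) containing all points of $\mathbb S$, whose union is closed; it is sibling $\sigma_d$-invariant if (1) images of leaves are leaves; (2) every leaf is the image of a leaf; (3) every non-critical leaf $\ell$ belongs to $d$ pairwise disjoint leaves $\ell_1=\ell,\dots,\ell_d$ with equal images. Nonempty means having a nondegenerate leaf. *)

From Stdlib Require Import Reals.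
From Coquelicot Require Import Coquelicot.
Open Scope R_scope.

Definition point := (R * R)%type.

(* A chord is represented by an ordered pair of endpoints; a lamination is
   required to be symmetric, so it is really a family of unordered chords. *)
Definition chord := (point * point)%type.

Definition on_circle (p : point) : Prop := fst p ^ 2 + snd p ^ 2 = 1.
Definition in_open_disk (p : point) : Prop := fst p ^ 2 + snd p ^ 2 < 1.

Definition cmul (z w : point) : point :=
  (fst z * fst w - snd z * snd w, fst z * snd w + snd z * fst w).
Fixpoint cpow (z : point) (n : nat) : point :=
  match n with O => (1, 0) | S k => cmul z (cpow z k) end.

Definition sigma (d : nat) (z : point) : point := cpow z d.

Definition sigma_chord (d : nat) (c : chord) : chord :=
  (sigma d (fst c), sigma d (snd c)).

Definition chord_eq (c1 c2 : chord) : Prop :=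
  (fst c1 = fst c2 /\ snd c1 = snd c2) \/ (fst c1 = snd c2 /\ snd c1 = fst c2).

Definition seg (c : chord) (p : point) : Prop :=
  exists t : R, 0 <= t <= 1 /\
    p = (fst (fst c) + t * (fst (snd c) - fst (fst c)),
         snd (fst c) + t * (snd (snd c) - snd (fst c))).

Definition cross (c1 c2 : chord) : Prop :=
  ~ chord_eq c1 c2 /\ exists p, in_open_disk p /\ seg c1 p /\ seg c2 p.

Definition disjoint_chords (c1 c2 : chord) : Prop :=
  ~ exists p, seg c1 p /\ seg c2 p.

Definition critical (d : nat) (c : chord) : Prop :=
  fst c <> snd c /\ sigma d (fst c) = sigma d (snd c).

Definition degenerate (c : chord) : Prop := fst c = snd c.

Definition lamination (L : chord -> Prop) : Prop :=
  (forall c, L c -> on_circle (fst c) /\ on_circle (snd c)) /\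
  (forall a b, L (a, b) -> L (b, a)) /\
  (forall a, on_circle a -> L (a, a)) /\
  (forall c1 c2, L c1 -> L c2 -> ~ cross c1 c2) /\
  closed (fun p : point => exists c, L c /\ seg c p).

Definition sibling_invariant (d : nat) (L : chord -> Prop) : Prop :=
  (forall c, L c -> L (sigma_chord d c)) /\
  (forall c, L c -> exists c', L c' /\ chord_eq (sigma_chord d c') c) /\
  (forall c, L c -> ~ critical d c ->
     exists f : nat -> chord,
       f O = c /\
       (forall i, (i < d)%nat -> L (f i)) /\
       (forall i, (i < d)%nat -> chord_eq (sigma_chord d (f i)) (sigma_chord d c)) /\
       (forall i j, (i < d)%nat -> (j < d)%nat -> i <> j ->
          disjoint_chords (f i) (f j))).

Definition nonempty_lam (L : chord -> Prop) : Prop :=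
  exists c, L c /\ ~ degenerate c.

Definition nonempty_sibling_invariant_lamination (d : nat) (L : chord -> Prop) : Prop :=
  lamination L /\ sibling_invariant d L /\ nonempty_lam L.

Definition sublam (L' L : chord -> Prop) : Prop := forall c, L' c -> L c.

Definition chief (d : nat) (L L' : chord -> Prop) : Prop :=
  sublam L' L /\
  nonempty_sibling_invariant_lamination d L' /\
  (forall L'', sublam L'' L' -> nonempty_sibling_invariant_lamination d L'' ->
     forall c, L' c -> L'' c).

From Pilot Require Import Defs.
From Stdlib Require Import Reals.
From Coquelicot Require Import Coquelicot.
From Stdlib Require Import Lra Lia Classical ClassicalEpsilon ZArith.
From Stdlib Require Import Arith.Cantor.
(* Re-import the definitions so that [sigma] refers to [Defs.sigma] rather
   than to the summation operator of the real-number library. *)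
Import Pilot.Defs.
Open Scope R_scope.

(** The plane is second countable: fix an enumeration
  [basic_box k] of small open boxes with rational corners.  Starting from
  [L], run through the boxes; at step [k], if the current lamination has a
  nonempty sibling invariant sublamination whose union of leaves misses box
  [k], pass to such a sublamination, otherwise keep the current one.  The
  intersection of this decreasing chain is the chief.
  - It is again a nonempty sibling invariant lamination: this is the
    compactness part of the file.  Limits of leaves are leaves (the set of
    leaves of a lamination is closed); preimages and siblings are obtained as
    limits of preimages and siblings along a subsequence (Bolzano-Weierstrass);
    and nondegeneracy and disjointness survive the limit because
    [sigma_d] expands short chords by a factor 3/2: every nonempty invariant
    lamination has a leaf of length >= 1/(2 d^2), and sibling endpoints stay
    uniformly apart.
  - It is minimal: a proper sublamination misses some leaf [ab], hence (by the
    non-crossing property) the midpoint of [ab] and, by closedness, a whole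
    box around it; at the step of that box the chain avoided the box, yet
    still contains [ab], whose midpoint lies in the box. *)

Ltac point_eq := apply injective_projections; simpl; ring.

(** ** The map [z |-> z^d] on the unit circle *)

Lemma circle_Cmod (p : point) : on_circle p -> Cmod p = 1.
Proof. unfold on_circle, Cmod. intros H. rewrite H. apply sqrt_1. Qed.

Lemma cpow_Cmod (z : point) (k : nat) : Cmod (cpow z k) = Cmod z ^ k.
Proof.
  induction k as [|k IH]; simpl.
  - unfold Cmod; simpl. replace (1 * (1 * 1) + 0 * (0 * 1)) with 1 by ring. apply sqrt_1.
  - change (cmul z (cpow z k)) with (Cmult z (cpow z k)). rewrite Cmod_mult, IH. ring.
Qed.

Lemma Cminus_eq0 (a b : point) : Cmod (Cminus a b) = 0 -> a = b.
Proof.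
  intros H. apply Cmod_eq_0 in H. destruct a, b.
  unfold Cminus, Cplus, Copp in H; cbn [fst snd] in H. injection H; intros. f_equal; lra.
Qed.

Lemma Cmod_sym (a b : point) : Cmod (Cminus a b) = Cmod (Cminus b a).
Proof. replace (Cminus a b) with (Copp (Cminus b a)) by point_eq. apply Cmod_opp. Qed.

Lemma cpow_lipschitz (z w : point) (k : nat) : Cmod z = 1 -> Cmod w = 1 ->
  Cmod (Cminus (cpow z k) (cpow w k)) <= INR k * Cmod (Cminus z w).
Proof.
  intros Hz Hw. induction k as [|k IH].
  - simpl. replace (Cminus (1,0) (1,0)) with (RtoC 0) by point_eq. rewrite Cmod_0. lra.
  - simpl cpow. change (cmul z (cpow z k)) with (Cmult z (cpow z k)).
    change (cmul w (cpow w k)) with (Cmult w (cpow w k)).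
    replace (Cminus (Cmult z (cpow z k)) (Cmult w (cpow w k))) with
      (Cplus (Cmult z (Cminus (cpow z k) (cpow w k))) (Cmult (Cminus z w) (cpow w k)))
      by point_eq.
    eapply Rle_trans; [apply Cmod_triangle|].
    rewrite !Cmod_mult, Hz, cpow_Cmod, Hw, pow1, S_INR. lra.
Qed.

Fixpoint geom_sum (a b : point) (k : nat) : point :=
  match k with O => (0,0) | S k => Cplus (Cmult a (geom_sum a b k)) (cpow b k) end.

Lemma cpow_sub_factor (a b : point) (k : nat) :
  Cminus (cpow a k) (cpow b k) = Cmult (Cminus a b) (geom_sum a b k).
Proof.
  induction k as [|k IH]; simpl; [point_eq|].
  change (cmul a (cpow a k)) with (Cmult a (cpow a k)).
  change (cmul b (cpow b k)) with (Cmult b (cpow b k)).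
  transitivity (Cplus (Cmult a (Cminus (cpow a k) (cpow b k))) (Cmult (Cminus a b) (cpow b k)));
    [point_eq|rewrite IH; point_eq].
Qed.

Lemma geom_sum_approx (a b : point) (k : nat) : Cmod a = 1 -> Cmod b = 1 ->
  Cmod (Cminus (Cmult (geom_sum a b k) a) (Cmult (RtoC (INR k)) (cpow a k)))
    <= INR k ^ 2 * Cmod (Cminus a b).
Proof.
  intros Ha Hb. induction k as [|k IH].
  - simpl. replace (Cminus (Cmult (0,0) a) (Cmult (RtoC 0) (1,0))) with (RtoC 0) by point_eq.
    rewrite Cmod_0. lra.
  - simpl geom_sum. simpl cpow. change (cmul a (cpow a k)) with (Cmult a (cpow a k)).
    replace (Cminus (Cmult (Cplus (Cmult a (geom_sum a b k)) (cpow b k)) a)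
                (Cmult (RtoC (INR (S k))) (Cmult a (cpow a k)))) with
      (Cplus (Cmult a (Cminus (Cmult (geom_sum a b k) a) (Cmult (RtoC (INR k)) (cpow a k))))
             (Cmult a (Cminus (cpow b k) (cpow a k)))) by (rewrite S_INR; point_eq).
    eapply Rle_trans; [apply Cmod_triangle|]. rewrite !Cmod_mult, Ha.
    pose proof (cpow_lipschitz b a k Hb Ha) as Hl. rewrite (Cmod_sym b a) in Hl.
    rewrite S_INR. pose proof (pos_INR k). pose proof (Cmod_ge_0 (Cminus a b)). nra.
Qed.

Lemma sigma_expands (d : nat) (a b : point) : (2 <= d)%nat -> Cmod a = 1 -> Cmod b = 1 ->
  Cmod (Cminus a b) <= / (2 * INR d ^ 2) ->
  3/2 * Cmod (Cminus a b) <= Cmod (Cminus (cpow a d) (cpow b d)).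
Proof.
  intros Hd Ha Hb Hsmall. rewrite cpow_sub_factor, Cmod_mult.
  pose proof (geom_sum_approx a b d Ha Hb) as Happ.
  assert (HD : 2 <= INR d) by (apply (le_INR 2); auto).
  assert (Hlead : Cmod (Cmult (RtoC (INR d)) (cpow a d)) = INR d).
  { rewrite Cmod_mult, cpow_Cmod, Ha, pow1, Cmod_R, Rabs_pos_eq; lra. }
  assert (Herr : INR d ^ 2 * Cmod (Cminus a b) <= / 2).
  { apply Rmult_le_compat_l with (r := INR d ^ 2) in Hsmall; [|nra].
    rewrite Rinv_mult in Hsmall.
    replace (INR d ^ 2 * (/ 2 * / INR d ^ 2)) with (/ 2) in Hsmall by (field; nra). lra. }
  assert (Hcof : 3/2 <= Cmod (geom_sum a b d)).
  { pose proof (Cmod_triangle (Cminus (Cmult (RtoC (INR d)) (cpow a d)) (Cmult (geom_sum a b d) a))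
                              (Cmult (geom_sum a b d) a)) as Ht.
    replace (Cplus (Cminus (Cmult (RtoC (INR d)) (cpow a d)) (Cmult (geom_sum a b d) a))
                   (Cmult (geom_sum a b d) a)) with (Cmult (RtoC (INR d)) (cpow a d)) in Ht by point_eq.
    rewrite Hlead, Cmod_sym, (Cmod_mult (geom_sum a b d) a), Ha in Ht. lra. }
  pose proof (Cmod_ge_0 (Cminus a b)). nra.
Qed.

(** ** Plane geometry of chords *)

Definition dist2 (p q : point) : R := (fst q - fst p) ^ 2 + (snd q - snd p) ^ 2.
Definition norm2 (p : point) : R := fst p ^ 2 + snd p ^ 2.

Lemma dist2_pos (p q : point) : p <> q -> 0 < dist2 p q.
Proof.
  intros Hpq. unfold dist2.
  destruct (Req_dec (fst q) (fst p)) as [Ex|Ex]; [destruct (Req_dec (snd q) (snd p)) as [Ey|Ey]|].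
  - exfalso. apply Hpq. destruct p, q; cbn in *; subst; reflexivity.
  - assert (0 < (snd q - snd p) ^ 2) by (apply pow2_gt_0; lra).
    pose proof (pow2_ge_0 (fst q - fst p)). lra.
  - assert (0 < (fst q - fst p) ^ 2) by (apply pow2_gt_0; lra).
    pose proof (pow2_ge_0 (snd q - snd p)). lra.
Qed.

Definition line_point (u v : point) (t : R) : point :=
  (fst u + t * (fst v - fst u), snd u + t * (snd v - snd u)).

Definition mid (a b : point) : point := ((fst a + fst b) / 2, (snd a + snd b) / 2).

Lemma line_point_0 (u v : point) : line_point u v 0 = u.
Proof. unfold line_point. destruct u; cbn. f_equal; ring. Qed.

Lemma line_point_1 (u v : point) : line_point u v 1 = v.
Proof. unfold line_point. destruct v; cbn. f_equal; ring. Qed.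

Lemma line_point_same (u : point) (t : R) : line_point u u t = u.
Proof. unfold line_point. destruct u; cbn. f_equal; ring. Qed.

Lemma mid_line_point (a b : point) : mid a b = line_point a b (1/2).
Proof. unfold mid, line_point. f_equal; field. Qed.

Lemma mid_seg (a b : point) : seg (a, b) (mid a b).
Proof. exists (1/2). split; [lra|]. apply mid_line_point. Qed.

Lemma seg_fst (a b : point) : seg (a, b) a.
Proof. exists 0. split; [lra|]. symmetry. apply line_point_0. Qed.

Lemma seg_snd (a b : point) : seg (a, b) b.
Proof. exists 1. split; [lra|]. symmetry. apply line_point_1. Qed.

Lemma line_point_norm2 (u v : point) (t : R) : on_circle u -> on_circle v ->
  norm2 (line_point u v t) = 1 - t * (1 - t) * dist2 u v.
Proof.
  unfold on_circle, norm2, line_point, dist2; cbn [fst snd]. intros Hu Hv.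
  transitivity ((1 - t) * (fst u ^ 2 + snd u ^ 2) + t * (fst v ^ 2 + snd v ^ 2)
                - t * (1 - t) * ((fst v - fst u) ^ 2 + (snd v - snd u) ^ 2)); [ring|].
  rewrite Hu, Hv. ring.
Qed.

Lemma line_point_in_disk (u v : point) (t : R) : on_circle u -> on_circle v -> u <> v ->
  0 < t < 1 -> in_open_disk (line_point u v t).
Proof.
  intros Hu Hv Huv Ht. unfold in_open_disk. fold (norm2 (line_point u v t)).
  rewrite line_point_norm2 by auto. pose proof (dist2_pos u v Huv).
  assert (0 < t * (1 - t)) by nra. nra.
Qed.

Lemma seg_norm2_le1 (u v p : point) : on_circle u -> on_circle v -> seg (u, v) p -> norm2 p <= 1.
Proof.
  intros Hu Hv [t [Ht ->]]. change (norm2 (line_point u v t) <= 1).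
  rewrite line_point_norm2 by auto. pose proof (pow2_ge_0 (fst v - fst u)).
  pose proof (pow2_ge_0 (snd v - snd u)). unfold dist2. cbn [fst snd].
  assert (0 <= t * (1 - t)) by nra. nra.
Qed.

Lemma seg_off_circle_in_disk (u v p : point) : on_circle u -> on_circle v -> seg (u, v) p ->
  ~ on_circle p -> in_open_disk p.
Proof.
  intros Hu Hv Hs Hp. pose proof (seg_norm2_le1 u v p Hu Hv Hs).
  unfold in_open_disk, on_circle, norm2 in *. lra.
Qed.

Lemma circle_not_disk (p : point) : on_circle p -> ~ in_open_disk p.
Proof. unfold on_circle, in_open_disk. lra. Qed.

Lemma seg_circle (u v p : point) : on_circle u -> on_circle v -> seg (u, v) p ->
  on_circle p -> p = u \/ p = v.
Proof.
  intros Hu Hv [t [Ht ->]] Hp.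
  change (on_circle (line_point u v t)) in Hp. change (line_point u v t = u \/ line_point u v t = v).
  destruct (classic (u = v)) as [<-|Huv]; [left; apply line_point_same|].
  destruct (Req_dec t 0) as [->|H0]; [left; apply line_point_0|].
  destruct (Req_dec t 1) as [->|H1]; [right; apply line_point_1|].
  exfalso. apply (circle_not_disk _ Hp). apply (line_point_in_disk u v t Hu Hv Huv). lra.
Qed.

(** [side p q r] is twice the signed area of the triangle [pqr]: its sign
    tells on which side of the line [pq] the point [r] lies. *)
Definition side (p q r : point) : R :=
  (fst q - fst p) * (snd r - snd p) - (snd q - snd p) * (fst r - fst p).

Lemma side_line_point (a b u v : point) (t : R) :
  side a b (line_point u v t) = (1 - t) * side a b u + t * side a b v.
Proof. unfold side, line_point; cbn [fst snd]. ring. Qed.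

Lemma side_mid (a b u v : point) : side u v (mid a b) = (side u v a + side u v b) / 2.
Proof. unfold side, mid; cbn [fst snd]. field. Qed.

Lemma side_refl_l (p r : point) : side p r p = 0.
Proof. unfold side. ring. Qed.

Lemma side_refl_r (p r : point) : side p r r = 0.
Proof. unfold side. ring. Qed.

Lemma collinear_line_point (p q r : point) : p <> q -> side p q r = 0 ->
  r = line_point p q (((fst r - fst p) * (fst q - fst p) + (snd r - snd p) * (snd q - snd p)) / dist2 p q).
Proof.
  intros Hpq Hs. pose proof (dist2_pos p q Hpq) as Hpos.
  unfold side, line_point in *. set (D := dist2 p q) in *.
  assert (HD : D = (fst q - fst p) ^ 2 + (snd q - snd p) ^ 2) by reflexivity. clearbody D.
  destruct p as [px py], q as [qx qy], r as [rx ry]; cbn [fst snd] in *.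
  f_equal; apply Rminus_diag_uniq.
  - replace (rx - (px + ((rx - px) * (qx - px) + (ry - py) * (qy - py)) / D * (qx - px)))
      with (- (qy - py) * ((qx - px) * (ry - py) - (qy - py) * (rx - px)) / D) by (subst D; field; lra).
    rewrite Hs. field. lra.
  - replace (ry - (py + ((rx - px) * (qx - px) + (ry - py) * (qy - py)) / D * (qy - py)))
      with ((qx - px) * ((qx - px) * (ry - py) - (qy - py) * (rx - px)) / D) by (subst D; field; lra).
    rewrite Hs. field. lra.
Qed.

Lemma line_circle (p q r : point) : on_circle p -> on_circle q -> on_circle r -> p <> q ->
  side p q r = 0 -> r = p \/ r = q.
Proof.
  intros Hp Hq Hr Hpq Hs. rewrite (collinear_line_point p q r Hpq Hs) in Hr |- *.
  set (s := _ / dist2 p q) in *.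
  assert (Hn : norm2 (line_point p q s) = 1) by exact Hr.
  rewrite line_point_norm2 in Hn by auto. pose proof (dist2_pos p q Hpq).
  assert (Hs01 : s * (1 - s) = 0) by nra.
  destruct (Rmult_integral _ _ Hs01) as [->|Hs1].
  - left. apply line_point_0.
  - right. replace s with 1 by lra. apply line_point_1.
Qed.

Lemma opposite_signs (x y t : R) : 0 < t < 1 -> (1 - t) * x + t * y = 0 -> x <> 0 -> x * y < 0.
Proof.
  intros Ht H Hx. assert (Hy : y = - ((1 - t) / t) * x) by (field_simplify_eq; lra).
  rewrite Hy. assert (0 < x * x) by (apply Rsqr_pos_lt; exact Hx).
  assert (0 < (1 - t) / t) by (apply Rdiv_lt_0_compat; lra). nra.
Qed.

Lemma mid_in_disk (a b : point) : on_circle a -> on_circle b -> a <> b -> in_open_disk (mid a b).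
Proof. intros. rewrite mid_line_point. apply line_point_in_disk; auto; lra. Qed.

Lemma chord_through_mid_separates (a b u v : point) :
  on_circle a -> on_circle b -> on_circle u -> on_circle v ->
  a <> b -> seg (u, v) (mid a b) -> ~ chord_eq (u, v) (a, b) ->
  side a b u * side a b v < 0 /\ side u v a * side u v b < 0.
Proof.
  intros Ha Hb Hu Hv Hab [t [Ht HM]] Hne. change (mid a b = line_point u v t) in HM.
  pose proof (mid_in_disk a b Ha Hb Hab) as Hdisk. rewrite HM in Hdisk.
  assert (Huv : u <> v).
  { intros <-. rewrite line_point_same in Hdisk. exact (circle_not_disk u Hu Hdisk). }
  assert (Ht01 : 0 < t < 1).
  { destruct (Req_dec t 0) as [->|H0]; [exfalso; rewrite line_point_0 in Hdisk; exact (circle_not_disk u Hu Hdisk)|].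
    destruct (Req_dec t 1) as [->|H1]; [exfalso; rewrite line_point_1 in Hdisk; exact (circle_not_disk v Hv Hdisk)|].
    lra. }
  assert (Hab_mid : (1 - t) * side a b u + t * side a b v = 0).
  { rewrite <- side_line_point, <- HM. unfold side, mid. cbn [fst snd]. field. }
  assert (Hsu : side a b u <> 0).
  { intros Hsu. assert (Hsv : side a b v = 0) by (rewrite Hsu in Hab_mid; nra).
    destruct (line_circle a b u Ha Hb Hu Hab Hsu), (line_circle a b v Ha Hb Hv Hab Hsv);
      subst; try contradiction; apply Hne; unfold chord_eq; cbn; auto. }
  pose proof (opposite_signs _ _ t Ht01 Hab_mid Hsu) as Hsep.
  split; [exact Hsep|].
  assert (Huv_mid : (1 - 1/2) * side u v a + 1/2 * side u v b = 0).
  { replace ((1 - 1/2) * side u v a + 1/2 * side u v b) with (side u v (mid a b))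
      by (rewrite side_mid; field).
    rewrite HM, side_line_point, side_refl_l, side_refl_r. ring. }
  apply (opposite_signs _ _ (1/2)); [lra|exact Huv_mid|].
  intros Hsa. destruct (line_circle u v a Hu Hv Ha Huv Hsa) as [<-|<-];
    rewrite side_refl_l in Hsep; lra.
Qed.

Lemma ratio_in_01 (x y : R) : x * y < 0 -> 0 < x / (x - y) < 1.
Proof.
  intros H. destruct (Rlt_or_le x 0) as [Hx|Hx].
  - assert (0 < y) by nra. split.
    + apply Rdiv_neg_neg; lra.
    + apply Rmult_lt_reg_r with (y - x); [lra|].
      replace (x / (x - y) * (y - x)) with (- x) by (field; lra). lra.
  - assert (0 < x) by (destruct Hx; [auto|subst; lra]). assert (y < 0) by nra. split.
    + apply Rdiv_lt_0_compat; lra.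
    + apply Rmult_lt_reg_r with (x - y); [lra|].
      replace (x / (x - y) * (x - y)) with x by (field; lra). lra.
Qed.

Lemma separation_cross (p q r s : point) : on_circle p -> on_circle q -> on_circle r -> on_circle s ->
  side p q r * side p q s < 0 -> side r s p * side r s q < 0 -> cross (p, q) (r, s).
Proof.
  intros Hp Hq Hr Hs H1 H2. split.
  - unfold chord_eq; cbn [fst snd]. intros [[E1 E2]|[E1 E2]]; subst.
    + rewrite side_refl_l in H2. lra.
    + rewrite side_refl_r in H2. lra.
  - set (t := side r s p / (side r s p - side r s q)).
    set (t' := side p q r / (side p q r - side p q s)).
    pose proof (ratio_in_01 _ _ H2) as Ht. pose proof (ratio_in_01 _ _ H1) as Ht'.
    fold t in Ht. fold t' in Ht'.
    assert (D1 : side r s p - side r s q <> 0) by nra.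
    assert (D2 : side p q r - side p q s <> 0) by nra.
    assert (Hpq : p <> q) by (intros ->; unfold side in H1; nra).
    exists (line_point p q t). split; [|split].
    + apply line_point_in_disk; auto; lra.
    + exists t. split; [lra|reflexivity].
    + exists t'. split; [lra|]. unfold t, t', line_point, side in *.
      destruct p as [px py], q as [qx qy], r as [rx ry], s as [sx sy]; cbn [fst snd] in *.
      f_equal; field; split; auto.
Qed.

Definition close (e : R) (p p' : point) : Prop :=
  Rabs (fst p' - fst p) < e /\ Rabs (snd p' - snd p) < e.

Definition bounded (p : point) : Prop := -1 <= fst p <= 1 /\ -1 <= snd p <= 1.

Lemma circle_bounded (p : point) : on_circle p -> bounded p.
Proof.
  unfold on_circle, bounded. intros H.
  pose proof (pow2_ge_0 (fst p)). pose proof (pow2_ge_0 (snd p)). split; split; nra.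
Qed.

Lemma close_refl (e : R) (p : point) : 0 < e -> close e p p.
Proof. unfold close. intros. rewrite !Rminus_diag, Rabs_R0. auto. Qed.

Lemma close_mid (e : R) (a b a' b' : point) :
  close e a a' -> close e b b' -> close e (mid a b) (mid a' b').
Proof.
  unfold close, mid; cbn [fst snd]. intros [H1 H2] [H3 H4].
  apply Rabs_def2 in H1, H2, H3, H4. split; apply Rabs_def1; lra.
Qed.

Lemma ball_close (x y : point) (e : R) : ball x e y <-> close e x y.
Proof.
  destruct x, y. unfold ball; simpl. unfold prod_ball; simpl. unfold ball; simpl.
  unfold AbsRing_ball, abs, minus, plus, opp; simpl. unfold close. tauto.
Qed.

Lemma Rabs_le_between (x c : R) : Rabs x <= c -> - c <= x <= c.
Proof. unfold Rabs. destruct (Rcase_abs x); lra. Qed.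

Lemma mul_bound (x y A B : R) : Rabs x <= A -> Rabs y <= B -> - (A * B) <= x * y <= A * B.
Proof.
  intros Hx Hy. apply Rabs_le_between. rewrite Rabs_mult.
  apply Rmult_le_compat; auto using Rabs_pos.
Qed.

Lemma side_continuous (p q r p' q' r' : point) (e : R) : bounded p -> bounded q -> bounded r ->
  e <= 1 -> close e p p' -> close e q q' -> close e r r' ->
  Rabs (side p' q' r' - side p q r) <= 24 * e.
Proof.
  unfold bounded, close, side.
  destruct p as [px py], q as [qx qy], r as [rx ry], p' as [px' py'], q' as [qx' qy'],
    r' as [rx' ry']; cbn [fst snd]. intros Hp Hq Hr He [P1 P2] [Q1 Q2] [R1 R2].
  apply Rabs_def2 in P1, P2, Q1, Q2, R1, R2.
  set (A1 := qx - px). set (A2 := qy - py). set (B1 := rx - px). set (B2 := ry - py).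
  set (dA1 := (qx' - qx) - (px' - px)). set (dA2 := (qy' - qy) - (py' - py)).
  set (dB1 := (rx' - rx) - (px' - px)). set (dB2 := (ry' - ry) - (py' - py)).
  replace ((qx' - px') * (ry' - py') - (qy' - py') * (rx' - px') - (A1 * B2 - A2 * B1))
    with (A1 * dB2 + dA1 * B2 + dA1 * dB2 - (A2 * dB1 + dA2 * B1 + dA2 * dB1))
    by (unfold A1, A2, B1, B2, dA1, dA2, dB1, dB2; ring).
  assert (Hbig : forall z, z = A1 \/ z = A2 \/ z = B1 \/ z = B2 -> Rabs z <= 2)
    by (intros z Hz; apply Rabs_le; unfold A1, A2, B1, B2 in Hz; lra).
  assert (Hsmall : forall z, z = dA1 \/ z = dA2 \/ z = dB1 \/ z = dB2 -> Rabs z <= 2 * e)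
    by (intros z Hz; apply Rabs_le; unfold dA1, dA2, dB1, dB2 in Hz; lra).
  assert (He0 : 0 <= e) by lra.
  pose proof (mul_bound A1 dB2 _ _ (Hbig A1 ltac:(tauto)) (Hsmall dB2 ltac:(tauto))).
  pose proof (mul_bound dA1 B2 _ _ (Hsmall dA1 ltac:(tauto)) (Hbig B2 ltac:(tauto))).
  pose proof (mul_bound dA1 dB2 _ _ (Hsmall dA1 ltac:(tauto)) (Hsmall dB2 ltac:(tauto))).
  pose proof (mul_bound A2 dB1 _ _ (Hbig A2 ltac:(tauto)) (Hsmall dB1 ltac:(tauto))).
  pose proof (mul_bound dA2 B1 _ _ (Hsmall dA2 ltac:(tauto)) (Hbig B1 ltac:(tauto))).
  pose proof (mul_bound dA2 dB1 _ _ (Hsmall dA2 ltac:(tauto)) (Hsmall dB1 ltac:(tauto))).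
  assert (2 * e * (2 * e) <= 4 * e) by nra.
  apply Rabs_le. lra.
Qed.

Lemma sign_stable (x y x' y' : R) : x * y < 0 -> Rabs (x' - x) <= Rabs x / 2 ->
  Rabs (y' - y) <= Rabs y / 2 -> x' * y' < 0.
Proof.
  intros H Hx Hy. apply Rabs_le_between in Hx, Hy.
  destruct (Rlt_or_le x 0) as [Hx0|Hx0].
  - assert (0 < y) by nra. rewrite (Rabs_left x) in Hx by lra. rewrite (Rabs_right y) in Hy by lra.
    assert (x' < 0) by lra. assert (0 < y') by lra. nra.
  - assert (0 < x) by (destruct Hx0; auto; subst; lra). assert (y < 0) by nra.
    rewrite (Rabs_right x) in Hx by lra. rewrite (Rabs_left y) in Hy by lra.
    assert (0 < x') by lra. assert (y' < 0) by lra. nra.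
Qed.

Lemma separation_cross_stable (a b u v : point) :
  on_circle a -> on_circle b -> on_circle u -> on_circle v ->
  side a b u * side a b v < 0 -> side u v a * side u v b < 0 ->
  exists e, 0 < e /\ forall a' b', on_circle a' -> on_circle b' ->
    close e a a' -> close e b b' -> cross (a', b') (u, v).
Proof.
  intros Ha Hb Hu Hv S1 S2.
  set (eta := Rmin (Rmin (Rabs (side a b u)) (Rabs (side a b v)))
                   (Rmin (Rabs (side u v a)) (Rabs (side u v b)))).
  assert (Hnz : forall x y : R, x * y < 0 -> 0 < Rabs x /\ 0 < Rabs y)
    by (intros x y Hxy; split; apply Rabs_pos_lt; intros ->; lra).
  destruct (Hnz _ _ S1), (Hnz _ _ S2).
  assert (Heta : 0 < eta) by (unfold eta; repeat apply Rmin_pos; auto).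
  assert (Hmin : eta <= Rabs (side a b u) /\ eta <= Rabs (side a b v) /\
                 eta <= Rabs (side u v a) /\ eta <= Rabs (side u v b)).
  { unfold eta. repeat split.
    - eapply Rle_trans; [apply Rmin_l|apply Rmin_l].
    - eapply Rle_trans; [apply Rmin_l|apply Rmin_r].
    - eapply Rle_trans; [apply Rmin_r|apply Rmin_l].
    - eapply Rle_trans; [apply Rmin_r|apply Rmin_r]. }
  exists (Rmin 1 (eta / 48)). split; [apply Rmin_pos; lra|].
  intros a' b' Ha' Hb' Ca Cb.
  pose proof (Rmin_l 1 (eta / 48)). pose proof (Rmin_r 1 (eta / 48)).
  set (e := Rmin 1 (eta / 48)) in *.
  assert (Hpert : forall p q r p' q' r', on_circle p -> on_circle q -> on_circle r ->
     close e p p' -> close e q q' -> close e r r' -> eta <= Rabs (side p q r) ->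
     Rabs (side p' q' r' - side p q r) <= Rabs (side p q r) / 2).
  { intros p q r p' q' r' Hp Hq Hr Cp Cq Cr Hs.
    eapply Rle_trans; [apply (side_continuous p q r p' q' r' e); auto using circle_bounded|]. lra. }
  assert (He : 0 < e) by (unfold e; apply Rmin_pos; lra).
  assert (Cu := close_refl e u He). assert (Cv := close_refl e v He).
  apply separation_cross; auto.
  - apply (sign_stable (side a b u) (side a b v)); auto; apply Hpert; tauto.
  - apply (sign_stable (side u v a) (side u v b)); auto; apply Hpert; tauto.
Qed.

Lemma leaf_through_limit (L : chord -> Prop) (x : point) : lamination L ->
  (forall e, 0 < e -> exists c p, L c /\ seg c p /\ close e x p) -> exists c, L c /\ seg c x.
Proof.
  intros [_ [_ [_ [_ Hcl]]]] Happ. apply Hcl. intros [eps Heps].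
  destruct (Happ eps (cond_pos eps)) as [c [p [Lc [Sp Cp]]]].
  apply (Heps p); [apply ball_close, Cp|]. exists c. auto.
Qed.

(** Leaves with both endpoints limits of endpoints of leaves are leaves
    (nondegenerate case): the leaf through the limit midpoint must be [ab],
    since any other leaf through it would cross the approximating leaves. *)
Lemma limit_leaf_nondeg (L : chord -> Prop) (a b : point) : lamination L ->
  on_circle a -> on_circle b -> a <> b ->
  (forall e, 0 < e -> exists a' b', L (a', b') /\ close e a a' /\ close e b b') -> L (a, b).
Proof.
  intros HL Ha Hb Hab Happ. pose proof HL as [Hc [Hsym [_ [Hnc _]]]].
  destruct (leaf_through_limit L (mid a b) HL) as [[u v] [Luv Suv]].
  { intros e He. destruct (Happ e He) as [a' [b' [L' [C1 C2]]]].
    exists (a', b'), (mid a' b'). split; [exact L'|]. split; [apply mid_seg|apply close_mid; auto]. }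
  destruct (Hc _ Luv) as [Hu Hv]; cbn [fst snd] in Hu, Hv.
  destruct (classic (chord_eq (u, v) (a, b))) as [[[E1 E2]|[E1 E2]]|Hne].
  { cbn in *; subst; exact Luv. }
  { cbn in *; subst; apply Hsym, Luv. }
  destruct (chord_through_mid_separates a b u v Ha Hb Hu Hv Hab Suv Hne) as [S1 S2].
  destruct (separation_cross_stable a b u v Ha Hb Hu Hv S1 S2) as [e [He Hcross]].
  destruct (Happ e He) as [a' [b' [L' [C1 C2]]]].
  destruct (Hc _ L') as [Ha' Hb']; cbn [fst snd] in Ha', Hb'.
  exfalso. apply (Hnc _ _ L' Luv). apply Hcross; auto.
Qed.

Lemma small_zero (z : R) : (forall e, 0 < e -> Rabs z < e) -> z = 0.
Proof.
  intros H. destruct (Req_dec z 0) as [|Hz]; auto. exfalso.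
  specialize (H (Rabs z) (Rabs_pos_lt _ Hz)). lra.
Qed.

Lemma circle_limit (p : point) :
  (forall e, 0 < e -> exists p', on_circle p' /\ close e p p') -> on_circle p.
Proof.
  intros H. unfold on_circle.
  enough (fst p ^ 2 + snd p ^ 2 - 1 = 0) by lra.
  apply small_zero. intros e He.
  destruct (H (Rmin 1 (e / 12)) ltac:(apply Rmin_pos; lra)) as [p' [Hp' [C1 C2]]].
  pose proof (Rmin_l 1 (e / 12)). pose proof (Rmin_r 1 (e / 12)).
  set (m := Rmin 1 (e / 12)) in *.
  pose proof (circle_bounded p' Hp') as [B1 B2]. unfold on_circle in Hp'.
  apply Rabs_def2 in C1, C2.
  replace (fst p ^ 2 + snd p ^ 2 - 1) with
    ((fst p - fst p') * (fst p + fst p') + (snd p - snd p') * (snd p + snd p')) by (rewrite <- Hp'; ring).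
  pose proof (mul_bound (fst p - fst p') (fst p + fst p') m 3 ltac:(apply Rabs_le; lra) ltac:(apply Rabs_le; lra)).
  pose proof (mul_bound (snd p - snd p') (snd p + snd p') m 3 ltac:(apply Rabs_le; lra) ltac:(apply Rabs_le; lra)).
  apply Rabs_def1; lra.
Qed.

Definition cclose (e : R) (c c' : chord) : Prop := close e (fst c) (fst c') /\ close e (snd c) (snd c').

Lemma limit_leaf (L : chord -> Prop) (c : chord) : lamination L ->
  (forall e, 0 < e -> exists c', L c' /\ cclose e c c') -> L c.
Proof.
  intros HL H. pose proof HL as [Hc [_ [Hdeg _]]]. destruct c as [a b].
  assert (Ha : on_circle a).
  { apply circle_limit. intros e He. destruct (H e He) as [c' [Lc' [C1 _]]].
    exists (fst c'). split; [apply (Hc _ Lc')|exact C1]. }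
  assert (Hb : on_circle b).
  { apply circle_limit. intros e He. destruct (H e He) as [c' [Lc' [_ C2]]].
    exists (snd c'). split; [apply (Hc _ Lc')|exact C2]. }
  destruct (classic (a = b)) as [<-|Hab]; [auto|].
  apply limit_leaf_nondeg; auto. intros e He. destruct (H e He) as [[a' b'] [Lc' [C1 C2]]].
  exists a', b'. auto.
Qed.

(** ** Subsequences and the Bolzano-Weierstrass theorem for chords *)

(** Subsequences are described by infinite sets of indices. *)
Definition infinite_set (I : nat -> Prop) : Prop := forall N, exists n, (N <= n)%nat /\ I n.

Definition conv_along (u : nat -> R) (l : R) (J : nat -> Prop) : Prop :=
  forall e, 0 < e -> exists N, forall n, J n -> (N <= n)%nat -> Rabs (u n - l) < e.

Definition chord_conv_along (f : nat -> chord) (c : chord) (J : nat -> Prop) : Prop :=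
  forall e, 0 < e -> exists N, forall n, J n -> (N <= n)%nat -> cclose e c (f n).

Lemma conv_along_sub (u : nat -> R) (l : R) (J J' : nat -> Prop) :
  (forall n, J' n -> J n) -> conv_along u l J -> conv_along u l J'.
Proof. intros Hs Hc e He. destruct (Hc e He) as [N HN]. exists N. intros n Hn. apply HN, Hs, Hn. Qed.

Lemma chord_conv_along_sub (f : nat -> chord) (c : chord) (J J' : nat -> Prop) :
  (forall n, J' n -> J n) -> chord_conv_along f c J -> chord_conv_along f c J'.
Proof. intros Hs Hc e He. destruct (Hc e He) as [N HN]. exists N. intros n Hn. apply HN, Hs, Hn. Qed.

Lemma increasing_choice (P : nat -> nat -> Prop) :
  (forall k N, exists n, (N <= n)%nat /\ P k n) ->
  exists h : nat -> nat, (forall k, (h k < h (S k))%nat) /\ forall k, P k (h k).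
Proof.
  intros H.
  destruct (choice (fun (kN : nat * nat) n => (snd kN <= n)%nat /\ P (fst kN) n)) as [next0 Hnext0].
  { intros [k N]. apply H. }
  set (next := fun k N => next0 (k, N)).
  assert (Hnext : forall k N, (N <= next k N)%nat /\ P k (next k N)) by (intros k N; apply (Hnext0 (k, N))).
  exists (fix h k := match k with O => next O O | S k => next (S k) (S (h k)) end).
  split; intros k.
  - apply (proj1 (Hnext (S k) _)).
  - destruct k; apply Hnext.
Qed.

Lemma increasing_lt (f : nat -> nat) : (forall k, (f k < f (S k))%nat) ->
  forall i j, (i < j)%nat -> (f i < f j)%nat.
Proof. intros H i j Hij. induction Hij; [apply H|]. specialize (H m). lia. Qed.

Lemma increasing_ge_id (f : nat -> nat) : (forall k, (f k < f (S k))%nat) -> forall k, (k <= f k)%nat.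
Proof. intros H k. induction k; [lia|]. specialize (H k). lia. Qed.

Lemma increasing_reflect_le (f : nat -> nat) : (forall k, (f k < f (S k))%nat) ->
  forall i j, (f i <= f j)%nat -> (i <= j)%nat.
Proof.
  intros H i j Hij. destruct (Nat.le_gt_cases i j); auto.
  pose proof (increasing_lt f H j i H0). lia.
Qed.

Lemma bolzano_weierstrass_along (I : nat -> Prop) (u : nat -> R) : infinite_set I ->
  (forall n, I n -> -1 <= u n <= 1) ->
  exists l J, (forall n, J n -> I n) /\ infinite_set J /\ conv_along u l J.
Proof.
  intros HI Hb.
  destruct (increasing_choice (fun _ n => I n)) as [g [Hg HgI]]; [intros _ N; apply HI|].
  destruct (Bolzano_Weierstrass (fun k => u (g k)) (fun c => -1 <= c <= 1) (compact_P3 (-1) 1))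
    as [l Hl]; [intros k; apply Hb, HgI|].
  destruct (increasing_choice (fun k p => Rabs (u (g p) - l) < / INR (S k))) as [h [Hh Hhl]].
  { intros k N. assert (Hp : 0 < / INR (S k)) by (apply Rinv_0_lt_compat, lt_0_INR; lia).
    destruct (Hl (disc l (mkposreal _ Hp)) N) as [p [Hp1 Hp2]];
      [exists (mkposreal _ Hp); intros y Hy; exact Hy|].
    exists p. split; auto. }
  assert (Hgh : forall k, (g (h k) < g (h (S k)))%nat) by (intros k; apply increasing_lt; auto).
  exists l, (fun n => exists k, n = g (h k)). split; [|split].
  - intros n [k ->]. apply HgI.
  - intros N. exists (g (h N)). split; [|eauto]. apply (increasing_ge_id (fun k => g (h k)) Hgh).
  - intros e He. destruct (archimed_cor1 e He) as [K [HK HK0]].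
    exists (g (h K)). intros n [k ->] Hn.
    apply (increasing_reflect_le (fun k => g (h k)) Hgh) in Hn.
    eapply Rlt_le_trans; [apply (Hhl k)|].
    apply Rle_trans with (/ INR K); [|lra].
    apply Rinv_le_contravar; [apply lt_0_INR; lia|apply le_INR; lia].
Qed.

Lemma chord_bolzano_weierstrass (I : nat -> Prop) (f : nat -> chord) : infinite_set I ->
  (forall n, I n -> bounded (fst (f n)) /\ bounded (snd (f n))) ->
  exists c J, (forall n, J n -> I n) /\ infinite_set J /\ chord_conv_along f c J.
Proof.
  intros HI Hb.
  destruct (bolzano_weierstrass_along I (fun n => fst (fst (f n))) HI) as [l1 [J1 [S1 [I1 C1]]]].
  { intros n Hn. apply Hb, Hn. }
  destruct (bolzano_weierstrass_along J1 (fun n => snd (fst (f n))) I1) as [l2 [J2 [S2 [I2 C2]]]].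
  { intros n Hn. apply Hb, S1, Hn. }
  destruct (bolzano_weierstrass_along J2 (fun n => fst (snd (f n))) I2) as [l3 [J3 [S3 [I3 C3]]]].
  { intros n Hn. apply Hb, S1, S2, Hn. }
  destruct (bolzano_weierstrass_along J3 (fun n => snd (snd (f n))) I3) as [l4 [J4 [S4 [I4 C4]]]].
  { intros n Hn. apply Hb, S1, S2, S3, Hn. }
  exists ((l1, l2), (l3, l4)), J4. split; [auto|]. split; [exact I4|].
  assert (HJ1 : forall n, J4 n -> J1 n) by auto. assert (HJ2 : forall n, J4 n -> J2 n) by auto.
  assert (HJ3 : forall n, J4 n -> J3 n) by auto.
  intros e He.
  destruct (conv_along_sub _ _ _ _ HJ1 C1 e He) as [N1 K1].
  destruct (conv_along_sub _ _ _ _ HJ2 C2 e He) as [N2 K2].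
  destruct (conv_along_sub _ _ _ _ HJ3 C3 e He) as [N3 K3].
  destruct (C4 e He) as [N4 K4].
  exists (N1 + N2 + N3 + N4)%nat. intros n Jn Hn. unfold cclose, close. cbn [fst snd].
  repeat split; [apply K1|apply K2|apply K3|apply K4]; auto; lia.
Qed.

Lemma family_bolzano_weierstrass (K : nat) (I : nat -> Prop) (F : nat -> nat -> chord) : infinite_set I ->
  (forall n i, I n -> (i < K)%nat -> bounded (fst (F n i)) /\ bounded (snd (F n i))) ->
  exists G J, (forall n, J n -> I n) /\ infinite_set J /\
    forall i, (i < K)%nat -> chord_conv_along (fun n => F n i) (G i) J.
Proof.
  intros HI. induction K as [|K IH]; intros Hb.
  - exists (fun _ => ((0,0),(0,0))), I. split; [|split]; auto. intros; lia.
  - destruct IH as [G [J [SJ [IJ CJ]]]]; [intros; apply Hb; auto|].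
    destruct (chord_bolzano_weierstrass J (fun n => F n K) IJ) as [c [J' [SJ' [IJ' CJ']]]].
    { intros n Hn. apply Hb; auto. }
    exists (fun i => if Nat.eq_dec i K then c else G i), J'. split; [|split]; auto.
    intros i Hi. destruct (Nat.eq_dec i K) as [->|Hne]; [exact CJ'|].
    apply (chord_conv_along_sub _ _ J); auto. apply CJ. lia.
Qed.

Lemma chord_conv_frequently (f : nat -> chord) (c : chord) (J : nat -> Prop) :
  chord_conv_along f c J -> infinite_set J ->
  forall e, 0 < e -> forall N, exists n, (N <= n)%nat /\ J n /\ cclose e c (f n).
Proof.
  intros Hc HJ e He N. destruct (Hc e He) as [N0 HN0].
  destruct (HJ (N + N0)%nat) as [n [Hn Jn]].
  exists n. split; [lia|]. split; [exact Jn|]. apply HN0; auto; lia.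
Qed.

Lemma cclose_all_eq (X Y : chord) : (forall e, 0 < e -> cclose e X Y) -> X = Y.
Proof.
  intros H. destruct X as [[x1 x2] [x3 x4]], Y as [[y1 y2] [y3 y4]].
  assert (y1 - x1 = 0) by (apply small_zero; intros e He; apply (H e He)).
  assert (y2 - x2 = 0) by (apply small_zero; intros e He; apply (H e He)).
  assert (y3 - x3 = 0) by (apply small_zero; intros e He; apply (H e He)).
  assert (y4 - x4 = 0) by (apply small_zero; intros e He; apply (H e He)).
  f_equal; f_equal; lra.
Qed.

Lemma cclose_mono (e e' : R) (X Y : chord) : e <= e' -> cclose e X Y -> cclose e' X Y.
Proof. unfold cclose, close. intros He [[H1 H2] [H3 H4]]. repeat split; lra. Qed.

Lemma monotone_alternative (P Q : R -> Prop) :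
  (forall e e', e <= e' -> P e -> P e') -> (forall e e', e <= e' -> Q e -> Q e') ->
  (forall e, 0 < e -> P e \/ Q e) -> (forall e, 0 < e -> P e) \/ (forall e, 0 < e -> Q e).
Proof.
  intros HP HQ H. destruct (classic (forall e, 0 < e -> P e)) as [|HnP]; [now left|right].
  apply not_all_ex_not in HnP as [e0 He0]. apply imply_to_and in He0 as [He0 HnP0].
  intros e He. destruct (Rle_or_lt e e0) as [Hle|Hlt].
  - destruct (H e He) as [Pe|Qe]; [exfalso; apply HnP0, (HP e); auto|exact Qe].
  - destruct (H e0 He0) as [Pe|Qe]; [contradiction|apply (HQ e0); auto; lra].
Qed.

Lemma chord_eq_limit (X C : chord) :
  (forall e, 0 < e -> exists Y, chord_eq Y C /\ cclose e X Y) -> chord_eq X C.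
Proof.
  intros H.
  destruct (monotone_alternative (fun e => cclose e X C) (fun e => cclose e X (snd C, fst C)))
    as [HC|HC]; try (intros e e' He; apply cclose_mono; exact He).
  - intros e He. destruct (H e He) as [[y1 y2] [[[E1 E2]|[E1 E2]] HY]]; cbn in E1, E2; subst.
    + left. destruct C. exact HY.
    + right. exact HY.
  - left. rewrite (cclose_all_eq X C HC). auto.
  - right. rewrite (cclose_all_eq X _ HC). auto.
Qed.

Lemma Cmod_dist_triangle (a b c : point) :
  Cmod (Cminus a c) <= Cmod (Cminus a b) + Cmod (Cminus b c).
Proof.
  replace (Cminus a c) with (Cplus (Cminus a b) (Cminus b c)) by point_eq. apply Cmod_triangle.
Qed.

Lemma close_Cmod (e : R) (x y : point) : close e x y -> Cmod (Cminus y x) < 2 * e.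
Proof.
  intros [C1 C2]. unfold Cmod. rewrite <- (sqrt_pow2 (2 * e)) by (pose proof (Rabs_pos (fst y - fst x)); lra).
  apply sqrt_lt_1_alt. unfold Cminus, Cplus, Copp; cbn [fst snd].
  replace (fst y + - fst x) with (fst y - fst x) by ring. replace (snd y + - snd x) with (snd y - snd x) by ring.
  split; [apply Rplus_le_le_0_compat; apply pow2_ge_0|].
  rewrite <- (pow2_abs (fst y - fst x)), <- (pow2_abs (snd y - snd x)).
  pose proof (Rabs_pos (fst y - fst x)). pose proof (Rabs_pos (snd y - snd x)).
  assert (Rabs (fst y - fst x) ^ 2 < e ^ 2) by nra.
  assert (Rabs (snd y - snd x) ^ 2 < e ^ 2) by nra. nra.
Qed.

Lemma Cmod_close (e : R) (x y : point) : Cmod (Cminus y x) < e -> close e x y.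
Proof.
  intros H. pose proof (Rmax_Cmod (Cminus y x)) as Hmax.
  assert (E1 : fst (Cminus y x) = fst y - fst x) by (unfold Cminus, Cplus, Copp; simpl; ring).
  assert (E2 : snd (Cminus y x) = snd y - snd x) by (unfold Cminus, Cplus, Copp; simpl; ring).
  rewrite E1, E2 in Hmax.
  pose proof (Rmax_l (Rabs (fst y - fst x)) (Rabs (snd y - snd x))).
  pose proof (Rmax_r (Rabs (fst y - fst x)) (Rabs (snd y - snd x))).
  split; lra.
Qed.

Lemma sigma_close (d : nat) (e : R) (x y : point) : (0 < d)%nat ->
  on_circle x -> on_circle y -> close e x y -> close (INR d * (2 * e)) (sigma d x) (sigma d y).
Proof.
  intros Hd Hx Hy C. apply Cmod_close.
  eapply Rle_lt_trans; [apply cpow_lipschitz; apply circle_Cmod; auto|].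
  apply Rmult_lt_compat_l; [apply lt_0_INR; lia|]. apply close_Cmod, C.
Qed.

Lemma sigma_cclose (d : nat) (e : R) (X Y : chord) : (0 < d)%nat ->
  on_circle (fst X) -> on_circle (snd X) -> on_circle (fst Y) -> on_circle (snd Y) ->
  cclose (e / (2 * INR d)) X Y -> cclose e (sigma_chord d X) (sigma_chord d Y).
Proof.
  intros Hd H1 H2 H3 H4 [C1 C2].
  assert (Hd' : 0 < INR d) by (apply lt_0_INR; auto).
  assert (E : INR d * (2 * (e / (2 * INR d))) = e) by (field; lra).
  split; cbn [sigma_chord fst snd]; rewrite <- E; apply sigma_close; auto.
Qed.

Lemma distinct_limit (p q : point) (k : R) : 0 < k ->
  (forall e, 0 < e -> exists p' q', close e p p' /\ close e q q' /\ k <= Cmod (Cminus p' q')) ->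
  p <> q.
Proof.
  intros Hk H ->. destruct (H (k / 4) ltac:(lra)) as [p' [q' [C1 [C2 K]]]].
  pose proof (close_Cmod _ _ _ C1). pose proof (close_Cmod _ _ _ C2).
  pose proof (Cmod_dist_triangle p' q q'). rewrite (Cmod_sym q q') in H2. lra.
Qed.

Notation nsil d L := (nonempty_sibling_invariant_lamination d L).

Lemma leaf_on_circle (L : chord -> Prop) (c : chord) : lamination L -> L c ->
  on_circle (fst c) /\ on_circle (snd c).
Proof. intros [Hc _] Lc. auto. Qed.

Fixpoint iter_chord (d : nat) (c : chord) (k : nat) : chord :=
  match k with O => c | S k => sigma_chord d (iter_chord d c k) end.

(** Every nonempty forward invariant lamination has a leaf of length at least
    [1/(2 d^2)]: otherwise the images of a nondegenerate leaf would all be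
    short, hence would grow without bound by [sigma_expands]. *)
Lemma exists_long_leaf (d : nat) (L : chord -> Prop) : (2 <= d)%nat -> nsil d L ->
  exists c, L c /\ / (2 * INR d ^ 2) <= Cmod (Cminus (fst c) (snd c)).
Proof.
  intros Hd [HL [[Hfwd _] [c0 [Lc0 Hnd]]]].
  apply NNPP. intros Hno.
  assert (Hshort : forall c, L c -> Cmod (Cminus (fst c) (snd c)) < / (2 * INR d ^ 2)).
  { intros c Lc. apply Rnot_le_lt. intros Hle. apply Hno. eauto. }
  assert (Hiter : forall k, L (iter_chord d c0 k)) by (induction k; simpl; auto).
  set (l0 := Cmod (Cminus (fst c0) (snd c0))).
  assert (Hl0 : 0 < l0).
  { unfold l0. destruct (Cmod_ge_0 (Cminus (fst c0) (snd c0))) as [|E]; auto.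
    exfalso. apply Hnd. apply Cminus_eq0. auto. }
  assert (Hgrow : forall k, (1 + INR k / 2) * l0 <= Cmod (Cminus (fst (iter_chord d c0 k)) (snd (iter_chord d c0 k)))).
  { induction k as [|k IH].
    - simpl. unfold l0. lra.
    - simpl iter_chord. destruct (leaf_on_circle L _ HL (Hiter k)) as [Ha Hb].
      pose proof (sigma_expands d _ _ Hd (circle_Cmod _ Ha) (circle_Cmod _ Hb)
                   (Rlt_le _ _ (Hshort _ (Hiter k)))).
      cbn [sigma_chord fst snd]. unfold sigma. rewrite S_INR. pose proof (pos_INR k). nra. }
  destruct (INR_archimed (l0 / 2) (/ (2 * INR d ^ 2)) ltac:(lra)) as [k Hk].
  specialize (Hgrow k). specialize (Hshort _ (Hiter k)). nra.
Qed.

Lemma same_image_far (d : nat) (x y : point) : (2 <= d)%nat -> on_circle x -> on_circle y ->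
  x <> y -> sigma d x = sigma d y -> / (2 * INR d ^ 2) <= Cmod (Cminus x y).
Proof.
  intros Hd Hx Hy Hxy E. apply Rnot_lt_le. intros Hlt.
  pose proof (sigma_expands d x y Hd (circle_Cmod _ Hx) (circle_Cmod _ Hy) ltac:(lra)) as Hexp.
  unfold sigma in E. rewrite E in Hexp.
  replace (Cminus (cpow y d) (cpow y d)) with (RtoC 0) in Hexp by point_eq.
  rewrite Cmod_0 in Hexp. apply Hxy, Cminus_eq0. pose proof (Cmod_ge_0 (Cminus x y)). lra.
Qed.

Lemma preimage_separation (d : nat) (a b : point) : (2 <= d)%nat ->
  exists k, 0 < k /\ forall x y, on_circle x -> on_circle y -> x <> y ->
    (sigma d x = sigma d a \/ sigma d x = sigma d b) ->
    (sigma d y = sigma d a \/ sigma d y = sigma d b) -> k <= Cmod (Cminus x y).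
Proof.
  intros Hd. assert (HD : 0 < INR d) by (apply lt_0_INR; lia).
  assert (Hk0 : 0 < / (2 * INR d ^ 2)) by (apply Rinv_0_lt_compat; nra).
  destruct (classic (sigma d a = sigma d b)) as [Eab|Nab].
  - exists (/ (2 * INR d ^ 2)). split; [exact Hk0|]. intros x y Hx Hy Hxy Sx Sy.
    apply same_image_far; auto. destruct Sx, Sy; congruence.
  - set (gap := Cmod (Cminus (sigma d a) (sigma d b))).
    assert (Hgap : 0 < gap).
    { unfold gap. destruct (Cmod_ge_0 (Cminus (sigma d a) (sigma d b))) as [|E]; auto.
      exfalso. apply Nab, Cminus_eq0. auto. }
    exists (Rmin (/ (2 * INR d ^ 2)) (gap / INR d)).
    split; [apply Rmin_pos; [exact Hk0|apply Rdiv_lt_0_compat; auto]|].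
    intros x y Hx Hy Hxy Sx Sy.
    destruct (classic (sigma d x = sigma d y)) as [Exy|Nxy].
    + eapply Rle_trans; [apply Rmin_l|]. apply same_image_far; auto.
    + eapply Rle_trans; [apply Rmin_r|].
      assert (Hgxy : gap = Cmod (Cminus (sigma d x) (sigma d y))).
      { unfold gap. destruct Sx as [Sx|Sx], Sy as [Sy|Sy]; rewrite Sx, Sy;
          try reflexivity; try (exfalso; congruence). apply Cmod_sym. }
      pose proof (cpow_lipschitz x y d (circle_Cmod _ Hx) (circle_Cmod _ Hy)) as Hlip.
      unfold sigma in Hgxy. rewrite <- Hgxy in Hlip.
      apply Rmult_le_reg_l with (INR d); auto.
      replace (INR d * (gap / INR d)) with gap by (field; lra). lra.
Qed.

Lemma disjoint_endpoints (c1 c2 : chord) : disjoint_chords c1 c2 ->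
  fst c1 <> fst c2 /\ fst c1 <> snd c2 /\ snd c1 <> fst c2 /\ snd c1 <> snd c2.
Proof.
  destruct c1 as [a b], c2 as [u v]. unfold disjoint_chords; cbn [fst snd]. intros H.
  repeat split; intros E; subst; apply H.
  - exists u. split; apply seg_fst.
  - exists v. split; [apply seg_fst|apply seg_snd].
  - exists u. split; [apply seg_snd|apply seg_fst].
  - exists v. split; apply seg_snd.
Qed.

Lemma leaves_disjoint (L : chord -> Prop) (c1 c2 : chord) : lamination L -> L c1 -> L c2 ->
  fst c1 <> fst c2 -> fst c1 <> snd c2 -> snd c1 <> fst c2 -> snd c1 <> snd c2 ->
  disjoint_chords c1 c2.
Proof.
  intros HL L1 L2 N1 N2 N3 N4. pose proof HL as [Hc [_ [_ [Hnc _]]]].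
  destruct c1 as [a b], c2 as [u v]; cbn [fst snd] in *.
  destruct (Hc _ L1) as [Ha Hb], (Hc _ L2) as [Hu Hv]; cbn [fst snd] in *.
  intros [p [S1 S2]].
  destruct (classic (on_circle p)) as [Hp|Hp].
  - destruct (seg_circle a b p Ha Hb S1 Hp), (seg_circle u v p Hu Hv S2 Hp); subst; auto.
  - apply (Hnc _ _ L1 L2). split.
    + intros [[E1 E2]|[E1 E2]]; cbn [fst snd] in *; auto.
    + exists p. split; [apply (seg_off_circle_in_disk a b p)|]; auto.
Qed.

(** ** Intersections of decreasing chains *)

Definition chain_inter (Ls : nat -> chord -> Prop) (c : chord) : Prop := forall n, Ls n c.

Definition endpoint (b : bool) (c : chord) : point := if b then fst c else snd c.

Lemma endpoint_close (b : bool) (e : R) (c c' : chord) :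
  cclose e c c' -> close e (endpoint b c) (endpoint b c').
Proof. intros [H1 H2]. destruct b; auto. Qed.

Lemma endpoint_on_circle (b : bool) (c : chord) :
  on_circle (fst c) -> on_circle (snd c) -> on_circle (endpoint b c).
Proof. destruct b; auto. Qed.

Lemma endpoint_image (d : nat) (b : bool) (f c : chord) :
  chord_eq (sigma_chord d f) (sigma_chord d c) ->
  sigma d (endpoint b f) = sigma d (fst c) \/ sigma d (endpoint b f) = sigma d (snd c).
Proof. unfold chord_eq; cbn [sigma_chord fst snd]. destruct b; cbn; tauto. Qed.

Definition siblings (d : nat) (L : chord -> Prop) (c : chord) (f : nat -> chord) : Prop :=
  f O = c /\
  (forall i, (i < d)%nat -> L (f i)) /\
  (forall i, (i < d)%nat -> chord_eq (sigma_chord d (f i)) (sigma_chord d c)) /\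
  (forall i j, (i < d)%nat -> (j < d)%nat -> i <> j -> disjoint_chords (f i) (f j)).

Section DecreasingChain.

Variable d : nat.
Hypothesis d_ge2 : (2 <= d)%nat.
Variable Ls : nat -> chord -> Prop.
Hypothesis chain_decr : forall n c, Ls (S n) c -> Ls n c.
Hypothesis chain_nsil : forall n, nsil d (Ls n).

Lemma chain_mono (m n : nat) (c : chord) : (m <= n)%nat -> Ls n c -> Ls m c.
Proof. intros Hmn. induction Hmn; auto. Qed.

Lemma chain_lamination (n : nat) : lamination (Ls n).
Proof. apply chain_nsil. Qed.

Lemma chain_on_circle (n : nat) (c : chord) : Ls n c -> on_circle (fst c) /\ on_circle (snd c).
Proof. apply leaf_on_circle, chain_lamination. Qed.

Lemma chain_bounded (n : nat) (c : chord) : Ls n c -> bounded (fst c) /\ bounded (snd c).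
Proof. intros Hc. destruct (chain_on_circle n c Hc). split; apply circle_bounded; auto. Qed.

(** A limit along a subsequence of leaves [f n] of [Ls n] is a leaf of every
    [Ls m], since leaf sets are closed and the chain decreases. *)
Lemma chain_limit (f : nat -> chord) (c : chord) (J : nat -> Prop) :
  chord_conv_along f c J -> infinite_set J -> (forall n, J n -> Ls n (f n)) -> chain_inter Ls c.
Proof.
  intros Hc HJ Hf m. apply limit_leaf; [apply chain_lamination|].
  intros e He. destruct (chord_conv_frequently f c J Hc HJ e He m) as [n [Hn [Jn Cn]]].
  exists (f n). split; [apply (chain_mono m n); auto|exact Cn].
Qed.

Lemma chain_limit_of_witnesses (P : chord -> Prop) :
  (forall n, exists c, Ls n c /\ P c) ->
  exists f c J, (forall n, Ls n (f n) /\ P (f n)) /\ infinite_set J /\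
    chord_conv_along f c J /\ chain_inter Ls c.
Proof.
  intros H. destruct (choice (fun n c => Ls n c /\ P c) H) as [f Hf].
  destruct (chord_bolzano_weierstrass (fun _ => True) f) as [c [J [_ [HJ Hc]]]].
  { intros N. exists N. auto. }
  { intros n _. apply (chain_bounded n), Hf. }
  exists f, c, J. split; [exact Hf|]. split; [exact HJ|]. split; [exact Hc|].
  apply (chain_limit f c J Hc HJ). intros n _. apply Hf.
Qed.

Lemma chain_inter_lamination : lamination (chain_inter Ls).
Proof.
  split; [|split; [|split; [|split]]].
  - intros c Hc. apply (chain_on_circle 0), Hc.
  - intros a b H n. apply (chain_lamination n), H.
  - intros a Ha n. apply (chain_lamination n), Ha.
  - intros c1 c2 H1 H2. apply (chain_lamination 0); auto.
  - intros x Hx.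
    assert (Hn : forall n, exists c, Ls n c /\ seg c x).
    { intros n. destruct (chain_lamination n) as [_ [_ [_ [_ Hcl]]]]. apply Hcl. intros [eps Heps].
      apply Hx. exists eps. intros y Hy [c [Hc Hs]]. apply (Heps y Hy). exists c. auto. }
    destruct (classic (on_circle x)) as [Hxc|Hxc].
    { exists (x, x). split; [intros n; apply (chain_lamination n), Hxc|apply seg_fst]. }
    (* Off the circle, the leaf through [x] is unique up to orientation, so
       the leaf of [Ls 0] through [x] belongs to every [Ls n]. *)
    destruct (Hn 0%nat) as [[a b] [L0 S0]].
    destruct (chain_on_circle 0 _ L0) as [Ha Hb]; cbn [fst snd] in *.
    exists (a, b). split; auto. intros n.
    destruct (Hn n) as [[u v] [Ln Sn]].
    destruct (chain_lamination 0) as [_ [_ [_ [Hnc _]]]].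
    destruct (classic (chord_eq (a, b) (u, v))) as [[[E1 E2]|[E1 E2]]|Hne]; cbn [fst snd] in *; subst.
    + auto.
    + apply (chain_lamination n), Ln.
    + exfalso. apply (Hnc _ _ L0 (chain_mono 0 n _ ltac:(lia) Ln)). split; auto.
      exists x. split; [apply (seg_off_circle_in_disk a b x)|]; auto.
Qed.

(** Preimages pass to the limit, by continuity of [sigma_d]. *)
Lemma chain_inter_backward (c : chord) : chain_inter Ls c ->
  exists c', chain_inter Ls c' /\ chord_eq (sigma_chord d c') c.
Proof.
  intros Hc.
  destruct (chain_limit_of_witnesses (fun c' => chord_eq (sigma_chord d c') c)) as [F [cs [J [HF [HJ [Cc Hcs]]]]]].
  { intros n. destruct (chain_nsil n) as [_ [[_ [Hbwd _]] _]]. apply Hbwd, Hc. }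
  exists cs. split; [exact Hcs|].
  apply chord_eq_limit. intros e He.
  assert (Hd' : 0 < INR d) by (apply lt_0_INR; lia).
  destruct (chord_conv_frequently F cs J Cc HJ (e / (2 * INR d)) ltac:(apply Rdiv_lt_0_compat; lra) 0)
    as [n [_ [Jn Cn]]].
  exists (sigma_chord d (F n)). split; [apply HF|].
  destruct (chain_on_circle 0 _ (Hcs 0%nat)). destruct (chain_on_circle n _ (proj1 (HF n))).
  apply sigma_cclose; auto; lia.
Qed.

(** A limit of long leaves is a nondegenerate leaf. *)
Lemma chain_inter_nonempty : nonempty_lam (chain_inter Ls).
Proof.
  destruct (chain_limit_of_witnesses (fun c => / (2 * INR d ^ 2) <= Cmod (Cminus (fst c) (snd c))))
    as [F [cs [J [HF [HJ [Cc Hcs]]]]]].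
  { intros n. apply exists_long_leaf; auto. }
  exists cs. split; [exact Hcs|].
  apply (distinct_limit _ _ (/ (2 * INR d ^ 2))).
  - assert (0 < INR d) by (apply lt_0_INR; lia). apply Rinv_0_lt_compat. nra.
  - intros e He. destruct (chord_conv_frequently F cs J Cc HJ _ He 0) as [n [_ [Jn [C1 C2]]]].
    exists (fst (F n)), (snd (F n)). split; [exact C1|]. split; [exact C2|]. apply HF.
Qed.

(** Limits of sibling families remain disjoint: their endpoints are preimages
    of the endpoints of [c], which are uniformly separated. *)
Lemma limit_siblings_disjoint (c : chord) (F : nat -> nat -> chord) (G : nat -> chord) (J : nat -> Prop) :
  (forall n, siblings d (Ls n) c (F n)) -> infinite_set J ->
  (forall i, (i < d)%nat -> chord_conv_along (fun n => F n i) (G i) J) ->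
  (forall i, (i < d)%nat -> chain_inter Ls (G i)) ->
  forall i j, (i < d)%nat -> (j < d)%nat -> i <> j -> disjoint_chords (G i) (G j).
Proof.
  intros HF HJ CG HG i j Hi Hj Hij.
  destruct (preimage_separation d (fst c) (snd c) d_ge2) as [k [Hk Hsep]].
  assert (Hdistinct : forall bi bj : bool, endpoint bi (G i) <> endpoint bj (G j)).
  { intros bi bj. apply (distinct_limit _ _ k Hk). intros e He.
    destruct (CG i Hi e He) as [N1 K1]. destruct (CG j Hj e He) as [N2 K2].
    destruct (HJ (N1 + N2)%nat) as [n [Hn Jn]].
    destruct (HF n) as [_ [HL [HS HD]]].
    destruct (chain_on_circle n _ (HL i Hi)), (chain_on_circle n _ (HL j Hj)).
    exists (endpoint bi (F n i)), (endpoint bj (F n j)). split; [|split].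
    - apply endpoint_close, K1; auto; lia.
    - apply endpoint_close, K2; auto; lia.
    - apply Hsep; try apply endpoint_on_circle; auto; try (apply endpoint_image, HS; auto).
      destruct (disjoint_endpoints _ _ (HD i j Hi Hj Hij)) as [D1 [D2 [D3 D4]]].
      destruct bi, bj; auto. }
  apply (leaves_disjoint (Ls 0)); try apply HG; auto; [apply chain_lamination| | | |].
  - apply (Hdistinct true true).
  - apply (Hdistinct true false).
  - apply (Hdistinct false true).
  - apply (Hdistinct false false).
Qed.

Lemma chain_inter_siblings (c : chord) : chain_inter Ls c -> ~ critical d c ->
  exists f, siblings d (chain_inter Ls) c f.
Proof.
  intros Hc Hnc.
  destruct (choice (fun n f => siblings d (Ls n) c f)) as [F HF].
  { intros n. destruct (chain_nsil n) as [_ [[_ [_ Hsib]] _]]. apply Hsib; auto. }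
  destruct (family_bolzano_weierstrass d (fun _ => True) F) as [G [J [_ [HJ CG]]]].
  { intros N. exists N. auto. }
  { intros n i _ Hi. apply (chain_bounded n). apply HF, Hi. }
  assert (HG : forall i, (i < d)%nat -> chain_inter Ls (G i)).
  { intros i Hi. apply (chain_limit (fun n => F n i) (G i) J (CG i Hi) HJ).
    intros n _. apply HF, Hi. }
  assert (Hd' : 0 < INR d) by (apply lt_0_INR; lia).
  exists G. split; [|split; [exact HG|split]].
  - apply cclose_all_eq. intros e He.
    destruct (chord_conv_frequently _ _ J (CG 0%nat ltac:(lia)) HJ e He 0) as [n [_ [_ Cn]]].
    destruct (HF n) as [E0 _]. cbn beta in Cn. rewrite E0 in Cn. exact Cn.
  - intros i Hi. apply chord_eq_limit. intros e He.
    destruct (chord_conv_frequently _ _ J (CG i Hi) HJ (e / (2 * INR d))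
                ltac:(apply Rdiv_lt_0_compat; lra) 0) as [n [_ [Jn Cn]]].
    destruct (HF n) as [_ [HL [HS _]]].
    exists (sigma_chord d (F n i)). split; [apply HS; auto|].
    destruct (chain_on_circle 0 _ (HG i Hi 0%nat)). destruct (chain_on_circle n _ (HL i Hi)).
    apply sigma_cclose; auto; lia.
  - apply (limit_siblings_disjoint c F G J); auto.
Qed.

Lemma chain_inter_nsil : nsil d (chain_inter Ls).
Proof.
  split; [exact chain_inter_lamination|]. split; [|exact chain_inter_nonempty].
  split; [|split].
  - intros c Hc n. destruct (chain_nsil n) as [_ [[Hfwd _] _]]. apply Hfwd, Hc.
  - exact chain_inter_backward.
  - exact chain_inter_siblings.
Qed.

End DecreasingChain.

(** ** A countable basis of the plane *)

Lemma nat_diff_approx (y : R) : exists a b : nat, Rabs (y - (INR a - INR b)) < 1.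
Proof.
  destruct (base_Int_part y) as [H1 H2]. set (z := Int_part y) in *.
  destruct (Z_le_gt_dec 0 z) as [Hz|Hz].
  - exists (Z.to_nat z), 0%nat. rewrite (INR_IZR_INZ (Z.to_nat z)), Z2Nat.id by lia.
    simpl. apply Rabs_def1; lra.
  - exists 0%nat, (Z.to_nat (- z)). rewrite (INR_IZR_INZ (Z.to_nat (- z))), Z2Nat.id by lia.
    rewrite opp_IZR. simpl. apply Rabs_def1; lra.
Qed.

(** The [k]-th basic box: the open square of half-side [1/(m+1)] centered at
    [((a - b)/(m+1), (c - e)/(m+1))], where [k] encodes [(a, b, c, e, m)]. *)
Definition basic_box (k : nat) (p : point) : Prop :=
  let (x, m) := Cantor.of_nat k in let (y, z) := Cantor.of_nat x in
  let (a, b) := Cantor.of_nat y in let (c, e) := Cantor.of_nat z in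
  Rabs (fst p - (INR a - INR b) / INR (S m)) < / INR (S m) /\
  Rabs (snd p - (INR c - INR e) / INR (S m)) < / INR (S m).

Lemma basic_box_basis (M : point) (eps : R) : 0 < eps ->
  exists k, basic_box k M /\ forall p, basic_box k p -> close eps M p.
Proof.
  intros He. destruct (archimed_cor1 (eps / 2) ltac:(lra)) as [N [HN HN0]].
  destruct N as [|m]; [lia|].
  set (w := INR (S m)). assert (Hw : 0 < w) by (apply lt_0_INR; lia).
  destruct (nat_diff_approx (fst M * w)) as [a [b Hab]].
  destruct (nat_diff_approx (snd M * w)) as [c [e Hce]].
  exists (Cantor.to_nat (Cantor.to_nat (Cantor.to_nat (a, b), Cantor.to_nat (c, e)), m)).
  unfold basic_box. rewrite !Cantor.cancel_of_to. fold w.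
  assert (Hscale : forall (x : R) (i j : nat), Rabs (x * w - (INR i - INR j)) < 1 ->
            Rabs (x - (INR i - INR j) / w) < / w).
  { intros x i j Hx. replace (x - (INR i - INR j) / w) with ((x * w - (INR i - INR j)) * / w) by (field; lra).
    rewrite Rabs_mult, (Rabs_right (/ w)) by (apply Rle_ge, Rlt_le, Rinv_0_lt_compat; lra).
    pose proof (Rinv_0_lt_compat w Hw). nra. }
  split; [split; apply Hscale; auto|].
  intros p [P1 P2]. pose proof (Hscale _ _ _ Hab) as K1. pose proof (Hscale _ _ _ Hce) as K2.
  apply Rabs_def2 in P1, P2, K1, K2.
  assert (/ w < eps / 2) by exact HN. split; apply Rabs_def1; lra.
Qed.

Definition avoids_box (L' : chord -> Prop) (k : nat) : Prop :=
  forall p, basic_box k p -> ~ (exists c, L' c /\ seg c p).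

Lemma off_leaves_box (L : chord -> Prop) (M : point) : lamination L ->
  ~ (exists c, L c /\ seg c M) -> exists k, basic_box k M /\ avoids_box L k.
Proof.
  intros [_ [_ [_ [_ Hcl]]]] HM.
  assert (Hloc : locally M (fun p => ~ exists c, L c /\ seg c p)) by (apply NNPP; intros Hn; apply HM, Hcl, Hn).
  destruct Hloc as [eps Heps].
  destruct (basic_box_basis M eps (cond_pos eps)) as [k [Bk Hk]].
  exists k. split; [exact Bk|]. intros p Bp. apply Heps, ball_close, Hk, Bp.
Qed.

(** If [ab] is a leaf of [L'] but not of its sublamination [L''], the
    midpoint of [ab] is on no leaf of [L'']: such a leaf would cross [ab]. *)
Lemma mid_off_sublamination (L' L'' : chord -> Prop) (a b : point) :
  lamination L' -> lamination L'' -> sublam L'' L' -> L' (a, b) -> ~ L'' (a, b) ->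
  ~ (exists c, L'' c /\ seg c (mid a b)).
Proof.
  intros HL' HL'' Hsub Lab Nab [[u v] [Luv Suv]].
  destruct (leaf_on_circle L' _ HL' Lab) as [Ha Hb]; cbn [fst snd] in *.
  destruct (classic (a = b)) as [<-|Hab]; [apply Nab, HL''; auto|].
  destruct HL' as [_ [_ [_ [Hnc _]]]].
  destruct (classic (chord_eq (u, v) (a, b))) as [[[E1 E2]|[E1 E2]]|Hne]; cbn [fst snd] in *; subst.
  - contradiction.
  - apply Nab, HL'', Luv.
  - apply (Hnc _ _ (Hsub _ Luv) Lab). split; auto. exists (mid a b). split; [|split; auto; apply mid_seg].
    apply mid_in_disk; auto.
Qed.

(** ** The exhaustion and the main theorem *)

Definition good_sub (d : nat) (Lcur L' : chord -> Prop) (k : nat) : Prop :=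
  nsil d L' /\ sublam L' Lcur /\ avoids_box L' k.

Definition exhaust_step (d : nat) (Lcur : chord -> Prop) (k : nat) : chord -> Prop :=
  epsilon (inhabits Lcur)
    (fun L' => good_sub d Lcur L' k \/ (~ (exists L'', good_sub d Lcur L'' k) /\ L' = Lcur)).

Lemma exhaust_step_spec (d : nat) (Lcur : chord -> Prop) (k : nat) :
  good_sub d Lcur (exhaust_step d Lcur k) k \/
  (~ (exists L'', good_sub d Lcur L'' k) /\ exhaust_step d Lcur k = Lcur).
Proof.
  unfold exhaust_step. apply epsilon_spec.
  destruct (classic (exists L'', good_sub d Lcur L'' k)) as [[L'' H]|H].
  - exists L''. auto.
  - exists Lcur. auto.
Qed.

Fixpoint exhaustion (d : nat) (L : chord -> Prop) (k : nat) : chord -> Prop :=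
  match k with O => L | S k => exhaust_step d (exhaustion d L k) k end.

Lemma exhaust_step_sub (d : nat) (Lcur : chord -> Prop) (k : nat) : nsil d Lcur ->
  nsil d (exhaust_step d Lcur k) /\ sublam (exhaust_step d Lcur k) Lcur.
Proof.
  intros HLcur. destruct (exhaust_step_spec d Lcur k) as [[H1 [H2 _]]|[_ ->]]; [auto|].
  split; [exact HLcur|intros c Hc; exact Hc].
Qed.

Lemma exhaustion_chain (d : nat) (L : chord -> Prop) : nsil d L ->
  forall k, nsil d (exhaustion d L k) /\ sublam (exhaustion d L (S k)) (exhaustion d L k).
Proof.
  intros HL k. assert (Hk : nsil d (exhaustion d L k)).
  { induction k as [|k IH]; [exact HL|apply (exhaust_step_sub d _ k IH)]. }
  split; [exact Hk|apply (exhaust_step_sub d _ k Hk)].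
Qed.

Lemma exhaustion_avoids (d : nat) (L : chord -> Prop) (k : nat) :
  (exists L'', good_sub d (exhaustion d L k) L'' k) -> avoids_box (exhaustion d L (S k)) k.
Proof.
  intros H. cbn [exhaustion].
  destruct (exhaust_step_spec d (exhaustion d L k) k) as [[_ [_ A]]|[N _]]; [exact A|contradiction].
Qed.

Theorem lemmal (d : nat) (L : chord -> Prop) :
  (2 <= d)%nat ->
  nonempty_sibling_invariant_lamination d L ->
  exists L' : chord -> Prop, chief d L L'.
Proof.
  intros Hd HL.
  pose proof (exhaustion_chain d L HL) as Hchain.
  assert (Hinter : nsil d (chain_inter (exhaustion d L)))
    by (apply chain_inter_nsil; auto; intros; apply Hchain; auto).
  exists (chain_inter (exhaustion d L)). split; [intros c Hc; exact (Hc 0%nat)|split; [exact Hinter|]].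
  intros L'' Hsub HL'' [a b] Hab. apply NNPP. intros Nab.
  (* A leaf [ab] of the intersection missing from [L''] yields a box around
     its midpoint avoided by [L'']; the exhaustion then avoids that box,
     yet keeps [ab]. *)
  destruct (off_leaves_box L'' (mid a b) (proj1 HL''))
    as [k [Bk Avk]]; [exact (mid_off_sublamination _ _ a b (proj1 Hinter) (proj1 HL'') Hsub Hab Nab)|].
  apply (exhaustion_avoids d L k) with (mid a b); [|exact Bk|].
  - exists L''. split; [exact HL''|split; [intros c Hc; exact (Hsub c Hc k)|exact Avk]].
  - exists (a, b). split; [apply Hab|apply mid_seg].
Qed.
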